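(* Let $K$ be a perfect field with $\mathrm{char}(K)\neq 2$ and algebraic closure $K_a$. Let $f(t)\in K[t]$ be a separable irreducible polynomial of degree $7$ whose Galois group $\mathrm{Gal}(f)$ is either $\mathbf{S}_7$ or $\mathbf{A}_7$, and let $\mathfrak{R}_f\subset K_a$ be its set of $7$ roots. Then the $7$-element set $B_f=\{(\alpha^3:\alpha:1)\mid \alpha\in\mathfrak{R}_f\}\subset\mathbb{P}^2(K_a)$ is in general position, i.e. no three of its points lie on a line and no six of its points lie on a conic. *)

From mathcomp Require Import all_boot all_order all_algebra all_fingroup all_solvable all_field.
Set Implicit Arguments. Unset Strict Implicit. Unset Printing Implicit Defensive.
Import GRing.Theory.
Local Open Scope ring_scope.

(* A field F is perfect: either char 0, or char p and Frobenius is onto. *)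
Definition perfect_field (F : fieldType) : Prop :=
  forall p : nat, p \in [pchar F] -> forall x : F, exists y : F, y ^+ p = x.

(* The permutation group of the 7 labelled roots r induced by Gal(E/F):
   the Galois group of f viewed inside S_7 via the labelling r. *)
Definition gal_perm_group (F : fieldType) (L : splittingFieldType F)
    (E : {subfield L}) (r : 'I_7 -> L) : {set {perm 'I_7}} :=
  [set s : {perm 'I_7} | [exists g in 'Gal(E / 1%AS)%g,
      [forall i : 'I_7, g (r i) == r (s i)]]].

(* homogeneous coordinates in P^2(C) *)
Definition pt3 (C : fieldType) := (C * C * C)%type.

Definition cubic_pt (C : fieldType) (a : C) : pt3 C := (a ^+ 3, a, 1).

Definition on_line (C : fieldType) (l P : pt3 C) : bool :=
  l.1.1 * P.1.1 + l.1.2 * P.1.2 + l.2 * P.2 == 0.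

Definition nonzero_pt (C : fieldType) (l : pt3 C) : bool :=
  [|| l.1.1 != 0, l.1.2 != 0 | l.2 != 0].

Definition on_conic (C : fieldType) (q : 'I_6 -> C) (P : pt3 C) : bool :=
  let: (x, y, z) := P in
  q (inord 0) * x ^+ 2 + q (inord 1) * y ^+ 2 + q (inord 2) * z ^+ 2
  + q (inord 3) * (x * y) + q (inord 4) * (x * z) + q (inord 5) * (y * z) == 0.

Definition general_position7 (C : fieldType) (P : 'I_7 -> pt3 C) : Prop :=
  (forall i j k : 'I_7, i != j -> i != k -> j != k ->
     ~ exists l : pt3 C,
         [/\ nonzero_pt l, on_line l (P i), on_line l (P j) & on_line l (P k)])
  /\
  (forall S : {set 'I_7}, #|S| = 6 ->
     ~ exists q : 'I_6 -> C,
         (exists m, q m != 0) /\ (forall i, i \in S -> on_conic q (P i))).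

From mathcomp Require Import all_boot all_order all_algebra all_fingroup all_solvable all_field.
From mathcomp Require Import zify ring.
Import GRing.Theory.
Local Open Scope ring_scope.

(* A point (a^3 : a : 1) lies on the line u x + v y + w z = 0 iff a is a root
   of u t^3 + v t + w, and on a conic iff a is a root of a polynomial of degree
   at most 6 with no t^5 term.  A polynomial of degree at most n with n distinct
   roots and vanishing t^(n-1) coefficient has root sum 0, so three collinear
   or six conconic points of B_f give a nonempty proper set S of roots of f
   with sum_S = 0.  For k in S and y outside S, some even permutation maps S to
   S - {k} + {y}; the corresponding automorphism of the splitting field turns
   sum_S = 0 into sum_(S - {k} + {y}) = 0, whence r k = r y.  Only A_7 <= Gal(f)
   and the distinctness of the roots are used. *)

Section Transpositions.

Variable T : finType.
Implicit Types (S : {set T}) (i j k y : T).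

Lemma tperm_imset_id {S i j} : (i \in S) = (j \in S) -> tperm i j @: S = S.
Proof.
move=> ijS; apply/setP => x.
rewrite (can2_imset_pre _ (tpermK i j) (tpermK i j)) inE.
by case: tpermP => [->|->|].
Qed.

Lemma tperm_imset_exchange {S k y} :
  k \in S -> y \notin S -> tperm k y @: S = y |: (S :\ k).
Proof.
move=> kS yS; apply/setP => x.
rewrite (can2_imset_pre _ (tpermK k y) (tpermK k y)) !inE.
have ky : k != y by apply: contraNneq yS => <-.
case: tpermP => [->|->|/eqP xk /eqP xy].
- by rewrite (negbTE yS) (negbTE ky) eqxx.
- by rewrite eqxx.
- by rewrite (negbTE xy) xk.
Qed.

Lemma same_side_pair S : (2 < #|T|)%N ->
  exists i j, i != j /\ (i \in S) = (j \in S).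
Proof.
move=> T_gt2; have [S_gt1 | S_le1] := ltnP 1 #|S|.
  by have/card_gt1P [i [j [iS jS ij]]] := S_gt1; exists i, j; rewrite iS jS.
have/card_gt1P [i [j [iS jS ij]]] : (1 < #|~: S|)%N.
  by move: T_gt2; rewrite -(cardsC S); lia.
by exists i, j; move: iS jS; rewrite !inE => /negbTE-> /negbTE->.
Qed.

Lemma Alt_exchange {S k y} : (2 < #|T|)%N -> k \in S -> y \notin S ->
  exists2 s, s \in ('Alt_T)%g & s @: S = y |: (S :\ k).
Proof.
move=> T_gt2 kS yS; have [i [j [ij ijS]]] := same_side_pair S T_gt2.
have ky : k != y by apply: contraNneq yS => <-.
exists (tperm i j * tperm k y)%g.
  by rewrite Alt_even odd_permM !odd_tperm ij ky.
rewrite -[RHS](tperm_imset_exchange kS yS) -[in RHS](tperm_imset_id ijS).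
by rewrite -imset_comp; apply: eq_imset => x; rewrite permM.
Qed.

End Transpositions.

Section CubicCurve.

Context {C : fieldType}.
Implicit Types (p : {poly C}) (rs : seq C) (a : C).

Lemma Poly_neq0 (s : seq C) i : s`_i != 0 -> Poly s != 0.
Proof. by apply: contraNneq => s0; rewrite -coef_Poly s0 coef0. Qed.

Lemma root_sum_eq0 p rs :
    p != 0 -> (size p <= (size rs).+1)%N -> uniq rs -> all (root p) rs ->
  p`_(size rs).-1 = 0 -> \sum_(a <- rs) a = 0.
Proof.
move=> p0 size_p rs_uniq rs_root.
have [/size0nil-> _|rs0] := eqVneq (size rs) 0%N; first by rewrite big_nil.
have size_pE : size p = (size rs).+1.
  by apply/eqP; rewrite eqn_leq size_p max_poly_roots.
have urs : uniq_roots rs by rewrite uniq_rootsE.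
rewrite {1}(all_roots_prod_XsubC size_pE rs_root urs).
rewrite coefZ coefPn_prod_XsubC //.
by move/eqP; rewrite mulf_eq0 lead_coef_eq0 (negbTE p0) oppr_eq0 => /eqP.
Qed.

Definition cubic_line_poly (l : pt3 C) : {poly C} :=
  Poly [:: l.2; l.1.2; 0; l.1.1].

Lemma on_line_cubic_pt l a :
  on_line l (cubic_pt a) = root (cubic_line_poly l) a.
Proof.
by rewrite /on_line /cubic_pt /root horner_Poly /=; congr (_ == 0); ring.
Qed.

Definition cubic_conic_poly (q : 'I_6 -> C) : {poly C} :=
  Poly [:: q (inord 2); q (inord 5); q (inord 1); q (inord 4); q (inord 3); 0;
           q (inord 0)].

Lemma on_conic_cubic_pt q a :
  on_conic q (cubic_pt a) = root (cubic_conic_poly q) a.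
Proof.
by rewrite /on_conic /cubic_pt /root horner_Poly /=; congr (_ == 0); ring.
Qed.

Lemma cubic_line_poly_neq0 l : nonzero_pt l -> cubic_line_poly l != 0.
Proof.
by case/or3P => nz; [apply: (Poly_neq0 _ 3) | apply: (Poly_neq0 _ 1)
                    | apply: (Poly_neq0 _ 0)].
Qed.

Lemma cubic_conic_poly_neq0 q :
  (exists m, q m != 0) -> cubic_conic_poly q != 0.
Proof.
case=> m; rewrite -(inord_val m); move: (ltn_ord m).
case: (nat_of_ord m) => [|[|[|[|[|[|//]]]]]] _ qm;
  [ apply: (Poly_neq0 _ 6) | apply: (Poly_neq0 _ 2) | apply: (Poly_neq0 _ 0)
  | apply: (Poly_neq0 _ 4) | apply: (Poly_neq0 _ 3) | apply: (Poly_neq0 _ 1) ];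
  exact: qm.
Qed.

Lemma collinear_cubic_pts_sum l rs :
    nonzero_pt l -> size rs = 3 -> uniq rs ->
    (forall a, a \in rs -> on_line l (cubic_pt a)) ->
  \sum_(a <- rs) a = 0.
Proof.
move=> /cubic_line_poly_neq0 l0 rs3 rs_uniq rs_on.
apply: root_sum_eq0 l0 _ rs_uniq _ _; rewrite ?rs3 ?coef_Poly //.
- exact: size_Poly.
- by apply/allP => a /rs_on; rewrite on_line_cubic_pt.
Qed.

Lemma conconic_cubic_pts_sum q rs :
    (exists m, q m != 0) -> size rs = 6 -> uniq rs ->
    (forall a, a \in rs -> on_conic q (cubic_pt a)) ->
  \sum_(a <- rs) a = 0.
Proof.
move=> /cubic_conic_poly_neq0 q0 rs6 rs_uniq rs_on.
apply: root_sum_eq0 q0 _ rs_uniq _ _; rewrite ?rs6 ?coef_Poly //.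
- exact: size_Poly.
- by apply/allP => a /rs_on; rewrite on_conic_cubic_pt.
Qed.

End CubicCurve.

Section GaloisSubsetSums.

Context {F : fieldType} {L : splittingFieldType F} {E : {subfield L}}.
Context {r : 'I_7 -> L}.
Hypothesis r_inj : injective r.
Hypothesis Alt_sub_gal : ('Alt_('I_7) \subset gal_perm_group E r)%g.

Lemma gal_perm_subset_sum {s} : s \in gal_perm_group E r ->
  exists g : gal_of E,
    forall S : {set 'I_7}, g (\sum_(x in S) r x) = \sum_(x in s @: S) r x.
Proof.
rewrite inE => /existsP [g /andP [_ /forallP g_r]]; exists g => S.
rewrite linear_sum big_imset /=; last by move=> x y _ _; apply: perm_inj.
by apply: eq_bigr => x _; apply/eqP.
Qed.

Lemma proper_subset_sum_neq0 (S : {set 'I_7}) :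
  (0 < #|S| < 7)%N -> \sum_(x in S) r x != 0.
Proof.
case/andP => /card_gt0P [k kS] S_lt7.
have /card_gt0P [y] : (0 < #|~: S|)%N.
  by have := cardsC S; rewrite card_ord; lia.
rewrite inE => yS.
have I7_gt2 : (2 < #|'I_7|)%N by rewrite card_ord.
have [s /(subsetP Alt_sub_gal) s_gal sS] := Alt_exchange _ I7_gt2 kS yS.
have [g g_sum] := gal_perm_subset_sum s_gal.
apply/eqP => S0; have := g_sum S; rewrite S0 linear0 sS.
rewrite big_setU1 ?inE ?eqxx ?(negbTE yS) ?andbF //=.
move/esym/eqP; rewrite addr_eq0 => /eqP ry.
move/eqP: S0; rewrite (big_setD1 k kS) /= addr_eq0 -ry => /eqP /r_inj ky.
by rewrite -ky kS in yS.
Qed.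

End GaloisSubsetSums.

Theorem lemma1p3 (F : fieldType) (L : splittingFieldType F) (E : {subfield L})
    (C : closedFieldType) (phi : {rmorphism L -> C})
    (f : {poly F}) (r : 'I_7 -> L) :
  perfect_field F ->
  (2 \notin [pchar F])%N ->
  separable_poly f ->
  irreducible_poly f ->
  size f = 8%N ->
  splittingFieldFor 1%AS (map_poly (in_alg L) f) E ->
  injective r ->
  (forall i, root (map_poly (in_alg L) f) (r i)) ->
  (gal_perm_group E r = [set: {perm 'I_7}] \/ gal_perm_group E r = ('Alt_('I_7))%g) ->
  general_position7 (fun i => cubic_pt (phi (r i))).
Proof.
move=> _ _ _ _ _ _ r_inj _ gal_r.
have Alt_sub_gal : ('Alt_('I_7) \subset gal_perm_group E r)%g.
  by case: gal_r => ->; rewrite ?subsetT ?subxx.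
pose pts (S : {set 'I_7}) := [seq phi (r i) | i <- enum S].
have pts_uniq (S : {set 'I_7}) : uniq (pts S).
  by rewrite map_inj_uniq ?enum_uniq // => i j /fmorph_inj /r_inj.
have pts_sum_neq0 (S : {set 'I_7}) :
    (0 < #|S| < 7)%N -> \sum_(a <- pts S) a != 0.
  move/(proper_subset_sum_neq0 r_inj Alt_sub_gal).
  by rewrite big_map big_enum -rmorph_sum fmorph_eq0.
split=> [i j k ij ik jk [l [l0 li lj lk]] | S S6 [q [q0 Sq]]].
- pose S := [set i; j; k].
  have S3 : #|S| = 3.
    rewrite /S setUC !cardsU1 cards1 !inE ij !(eq_sym k).
    by rewrite (negbTE ik) (negbTE jk).
  apply: (negP (pts_sum_neq0 S _)); first by rewrite S3.
  apply/eqP/(collinear_cubic_pts_sum _ _ l0); rewrite ?size_map -?cardE //.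
  by move=> a /mapP [x]; rewrite mem_enum !inE => /orP [/orP [] |] /eqP -> ->.
- apply: (negP (pts_sum_neq0 S _)); first by rewrite S6.
  apply/eqP/(conconic_cubic_pts_sum _ _ q0); rewrite ?size_map -?cardE //.
  by move=> a /mapP [x]; rewrite mem_enum => /Sq ? ->.
Qed.
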